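(* Let $L_i,L_j$ be two of four general lines in $\mathbb P^2$, $P=L_i\cap L_j$, and let $f\colon Y\to\mathbb P^2$ be a composition of blowups at points of intersection of visible curves. Let $E,E'$ be two exceptional visible curves over $P$ with weights $(w_i,w_j)$ and $(w'_i,w'_j)$ (coefficients in $f^*L_i,f^*L_j$) such that $w_j/w_i<w'_j/w'_i$, and let $\Gamma$ be the chain of visible curves lying strictly between $E$ and $E'$ in the chain of visible curves over $P$, marked by $-C^2$. Then $$\det\Gamma=\begin{vmatrix}w_i&w_j\\ w'_i&w'_j\end{vmatrix}=\Big(\frac{w_i}{w_j}-\frac{w'_i}{w'_j}\Big)w_jw'_j.$$
   Context: Visible curves are the strict transforms of the lines and of all exceptional curves of the blowups; each blowup in $f$ is centered at an intersection point of two visible curves. The visible curves over $P$ together with the strict transforms of $L_i,L_j$ form a chain. The determinant of a chain with marks $a_1,\dots,a_k$ is the determinant of the tridiagonal matrix with diagonal $a_l$ and off-diagonal entries $-1$; the empty chain has determinant $1$. *)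

From mathcomp Require Import all_boot all_algebra.
Set Implicit Arguments. Unset Strict Implicit. Unset Printing Implicit Defensive.
Import GRing.Theory Num.Theory.
Local Open Scope ring_scope.

(* A visible curve in the chain over P = L_i \cap L_j :
   its mark  -C^2  and its weights (w_i, w_j) = (coeff in f^*L_i, coeff in f^*L_j). *)
Record vcurve := VC { vmark : int; vwt : nat * nat }.

(* Initial chain over P on P^2: the lines L_i, L_j themselves
   (L^2 = 1, so mark -1; weights (1,0) and (0,1)). *)
Definition chain0 : seq vcurve := [:: VC (-1) (1, 0)%N; VC (-1) (0, 1)%N].

Definition dummy_vc := VC 0 (0, 0)%N.

(* Blowing up the intersection point of the k-th and (k+1)-th curves of the chain:
   a new (-1)-curve with weight the sum of the neighbours' weights (pullbacks add)
   is inserted, and each neighbour's self-intersection drops by one. *)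
Definition bump (C : vcurve) : vcurve := VC (vmark C + 1) (vwt C).

Definition blowup_chain (c : seq vcurve) (k : nat) : seq vcurve :=
  let A := nth dummy_vc c k in
  let B := nth dummy_vc c k.+1 in
  take k c ++ [:: bump A; VC 1 ((vwt A).1 + (vwt B).1, (vwt A).2 + (vwt B).2)%N; bump B]
    ++ drop k.+2 c.

(* Chains over P obtainable by a composition f of blowups at intersection points
   of visible curves (blowups not over P do not change the chain over P). *)
Inductive reachable_chain : seq vcurve -> Prop :=
  | reach0 : reachable_chain chain0
  | reachS c k : reachable_chain c -> (k.+1 < size c)%N ->
      reachable_chain (blowup_chain c k).

Definition chain_det (s : seq int) : int :=
  \det (\matrix_(i < size s, j < size s)
          (if i == j then s`_i
           else if (i.+1 == j :> nat) || (j.+1 == i :> nat) then -1 else 0)).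

Definition between_marks (c : seq vcurve) (p q : nat) : seq int :=
  map vmark (drop (minn p q).+1 (take (maxn p q) c)).

(* The weights (w_i, w_j) of consecutive visible curves over P form a unimodular
   pair, and every visible curve C between two others satisfies
   (-C^2) w(C) = w(previous) + w(next); both facts hold for L_i, L_j and survive
   blowing up a node of the chain.  The second relation is the three-term
   recurrence of tridiagonal determinants, so expanding det Gamma along its first
   row gives det Gamma = det(w(E), w(E')) by induction on the length of Gamma.
   Unimodularity also makes the slope w_j / w_i strictly increasing along the
   chain, so the hypothesis on the slopes puts E before E'. *)

From Pilot Require Import Defs.
From mathcomp Require Import all_boot all_order all_algebra zify ring.

Set Implicit Arguments.
Unset Strict Implicit.
Unset Printing Implicit Defensive.

Import Order.TTheory GRing.Theory Num.Theory.
Local Open Scope ring_scope.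

Definition chain_mx (s : seq int) : 'M[int]_(size s) :=
  \matrix_(i < size s, j < size s)
    (if i == j then s`_i
     else if (i.+1 == j :> nat) || (j.+1 == i :> nat) then -1 else 0).

Lemma chain_detE s : chain_det s = \det (chain_mx s).
Proof. by []. Qed.

Lemma chain_det_nil : chain_det [::] = 1.
Proof. exact: det_mx00. Qed.

Lemma chain_det_seq1 x : chain_det [:: x] = x.
Proof. by rewrite chain_detE det_mx11 mxE. Qed.

Lemma chain_mx_minor x s : row' ord0 (col' ord0 (chain_mx (x :: s))) = chain_mx s.
Proof. by apply/matrixP => i j; rewrite !mxE. Qed.

Lemma chain_det_cons2 x y s :
  chain_det [:: x, y & s] = x * chain_det (y :: s) - chain_det s.
Proof.
rewrite !chain_detE (expand_det_row _ ord0) !big_ord_recl big1 => [|j _]; last first.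
  by rewrite mxE /= mul0r.
rewrite !mxE /= addr0 /cofactor (chain_mx_minor x (y :: s)) expr0 expr1 mul1r.
set M := row' _ _.
(* The first column of [M] is [-1; 0; ...; 0]. *)
have -> : \det M = - \det (chain_mx s).
  rewrite (expand_det_col _ ord0) big_ord_recl big1 => [|i _]; last by rewrite !mxE /= mul0r.
  rewrite !mxE /cofactor expr0 mul1r addr0 mulN1r.
  by congr (- \det _); apply/matrixP => i j; rewrite !mxE.
by rewrite -chain_detE; ring.
Qed.

Definition addw (u v : nat * nat) : nat * nat := (u.1 + v.1, u.2 + v.2)%N.

Definition wdet (u v : nat * nat) : int := u.1%:Z * v.2%:Z - u.2%:Z * v.1%:Z.

Lemma wdetxx u : wdet u u = 0.
Proof. rewrite /wdet; ring. Qed.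

Lemma wdetC u v : wdet v u = - wdet u v.
Proof. rewrite /wdet; ring. Qed.

Lemma wdetDl u v w : wdet (addw u v) w = wdet u w + wdet v w.
Proof. rewrite /wdet /= !PoszD; ring. Qed.

Lemma wdetDr u v w : wdet u (addw v w) = wdet u v + wdet u w.
Proof. rewrite /wdet /= !PoszD; ring. Qed.

Lemma wdet_lincomb z (m : int) u v w :
  m * v.1%:Z = u.1%:Z + w.1%:Z -> m * v.2%:Z = u.2%:Z + w.2%:Z ->
  m * wdet v z = wdet u z + wdet w z.
Proof. by move=> e1 e2; rewrite /wdet mulrBr !mulrA e1 e2; ring. Qed.

(* For vectors of the quadrant, [0 < wdet u v] says that the slope of [v]
   exceeds that of [u]. *)
Lemma wdet_gt0_trans u v w : 0 < wdet u v -> 0 < wdet v w -> 0 < wdet u w.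
Proof.
case: u v w => [a b] [c d] [e f]; rewrite /wdet /= => Duv Dvw.
have c_gt0 : (0 < c)%N.
  by move: Dvw; case: c Duv => // _; rewrite mul0r sub0r oppr_gt0 ltNge mulr_ge0.
have a_gt0 : (0 < a)%N.
  by move: Duv; case: a Dvw => // _; rewrite mul0r sub0r oppr_gt0 ltNge mulr_ge0.
have key : c%:Z * (a%:Z * f%:Z - b%:Z * e%:Z)
         = a%:Z * (c%:Z * f%:Z - d%:Z * e%:Z) + e%:Z * (a%:Z * d%:Z - b%:Z * c%:Z) by ring.
rewrite -(pmulr_rgt0 _ (_ : 0 < c%:Z)) // key.
by apply: ltr_wpDr; [rewrite mulr_ge0 // ltW | rewrite mulr_gt0].
Qed.

Definition weight (c : seq vcurve) (i : nat) : nat * nat := vwt (nth dummy_vc c i).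
Definition mark (c : seq vcurve) (i : nat) : int := vmark (nth dummy_vc c i).

Definition chain_unimodular (c : seq vcurve) :=
  forall i, (i.+1 < size c)%N -> wdet (weight c i) (weight c i.+1) = 1.

Definition chain_balanced (c : seq vcurve) := forall i, (i.+2 < size c)%N ->
  mark c i.+1 * (weight c i.+1).1%:Z = (weight c i).1%:Z + (weight c i.+2).1%:Z /\
  mark c i.+1 * (weight c i.+1).2%:Z = (weight c i).2%:Z + (weight c i.+2).2%:Z.

Lemma between_marks_nil c p : between_marks c p p.+1 = [::].
Proof.
rewrite /between_marks (minn_idPl (leqnSn p)) (maxn_idPr (leqnSn p)).
by rewrite drop_oversize // size_take_min geq_minl.
Qed.

Lemma between_marks_cons c p q : (p.+1 < q <= size c)%N ->
  between_marks c p q = mark c p.+1 :: between_marks c p.+1 q.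
Proof.
case/andP=> lt_pq le_qc; rewrite /between_marks.
have le_pq := ltnW (ltnW lt_pq); have le_p1q := ltnW lt_pq.
rewrite (minn_idPl le_pq) (maxn_idPr le_pq) (minn_idPl le_p1q) (maxn_idPr le_p1q).
rewrite (drop_nth dummy_vc) ?nth_take // size_take_min leq_min lt_pq.
exact: leq_trans lt_pq le_qc.
Qed.

Section UnimodularBalancedChain.
Variable c : seq vcurve.
Hypothesis c_unimodular : chain_unimodular c.
Hypothesis c_balanced : chain_balanced c.

Lemma wdet_weight_gt0 p q : (p < q < size c)%N -> 0 < wdet (weight c p) (weight c q).
Proof.
case/andP; elim: q => // q IH; rewrite ltnS leq_eqVlt => /orP[/eqP-> | lt_pq] lt_qc.
  by rewrite c_unimodular.
by apply: wdet_gt0_trans (IH lt_pq (ltnW lt_qc)) _; rewrite c_unimodular.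
Qed.

Lemma wdet_weight_recurrence p q : (p.+2 < size c)%N ->
  wdet (weight c p) (weight c q)
  = mark c p.+1 * wdet (weight c p.+1) (weight c q) - wdet (weight c p.+2) (weight c q).
Proof. by move=> /c_balanced[e1 e2]; rewrite (wdet_lincomb (weight c q) e1 e2) addrK. Qed.

Lemma chain_det_between_marks p q : (p < q < size c)%N ->
  chain_det (between_marks c p q) = wdet (weight c p) (weight c q).
Proof.
case/andP=> + lt_qc; have [n] := ubnP (q - p); elim: n p => // n IH p.
rewrite ltnS => bound lt_pq.
have [eq_q|[eq_q|lt_p2q]] : q = p.+1 \/ q = p.+2 \/ (p.+2 < q)%N by lia.
- by subst q; rewrite between_marks_nil chain_det_nil c_unimodular.
- subst q; rewrite between_marks_cons ?between_marks_nil ?chain_det_seq1; last by lia.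
  by rewrite wdet_weight_recurrence // c_unimodular // wdetxx mulr1 subr0.
- rewrite between_marks_cons; last by lia.
  rewrite (between_marks_cons (p := p.+1)); last by lia.
  rewrite chain_det_cons2 -between_marks_cons; last by lia.
  rewrite !IH; try lia.
  by rewrite [RHS]wdet_weight_recurrence //; lia.
Qed.

End UnimodularBalancedChain.

Ltac lia_ifs := repeat match goal with |- context[if ?b then _ else _] =>
  first [rewrite (_ : b = true); last by lia | rewrite (_ : b = false); last by lia] end.

Section Blowup.
Variables (c : seq vcurve) (k : nat).
Hypothesis k_lt : (k.+1 < size c)%N.

Lemma size_blowup : size (blowup_chain c k) = (size c).+1.
Proof. rewrite /blowup_chain !size_cat size_take size_drop /=; case: ifP; lia. Qed.

Lemma nth_blowup i : nth dummy_vc (blowup_chain c k) i =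
  if (i < k)%N then nth dummy_vc c i
  else if i == k then Defs.bump (nth dummy_vc c k)
  else if i == k.+1 then VC 1 (addw (weight c k) (weight c k.+1))
  else if i == k.+2 then Defs.bump (nth dummy_vc c k.+1)
  else nth dummy_vc c i.-1.
Proof.
have size_take_k : size (take k c) = k by rewrite size_take_min; lia.
rewrite /blowup_chain nth_cat size_take_k; case: ltnP => [lt_ik | le_ki].
  by rewrite nth_take.
rewrite nth_cat /=; case: (ltngtP i k) le_ki => // [lt_ki|->] _; last by rewrite subnn.
have [j ->] : exists j, i = (k + j.+1)%N by exists (i - k).-1; lia.
rewrite addKn; case: j => [|[|j]] /=; lia_ifs => //.
by rewrite nth_drop; congr nth; lia.
Qed.

Lemma weight_blowup i : weight (blowup_chain c k) i =
  if (i <= k)%N then weight c i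
  else if i == k.+1 then addw (weight c k) (weight c k.+1)
  else weight c i.-1.
Proof.
rewrite /weight nth_blowup; case: (ltngtP i k) => [lt_ik|lt_ki|->]; lia_ifs => //.
by case: ifP => // _; case: ifP => // /eqP->.
Qed.

Lemma mark_blowup i : mark (blowup_chain c k) i =
  if (i < k)%N then mark c i
  else if i == k then mark c k + 1
  else if i == k.+1 then 1
  else if i == k.+2 then mark c k.+1 + 1
  else mark c i.-1.
Proof. by rewrite /mark nth_blowup; case: ifP => //; do 4 case: ifP => //. Qed.

Lemma blowup_unimodular : chain_unimodular c -> chain_unimodular (blowup_chain c k).
Proof.
move=> unimod i; rewrite size_blowup !weight_blowup => lt_i.
have [lt_ik|lt_ki|->] := ltngtP i k; lia_ifs.
- by apply: unimod; lia.
- case: eqP => [->|ne_ik1]; first by rewrite /= wdetDl wdetxx addr0 unimod.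
  by case: i lt_i lt_ki ne_ik1 => // i *; apply: unimod; lia.
- by rewrite wdetDr wdetxx add0r unimod.
Qed.

Lemma blowup_balanced : chain_balanced c -> chain_balanced (blowup_chain c k).
Proof.
move=> bal i; rewrite size_blowup !mark_blowup !weight_blowup => lt_i.
have [lt_i1k|lt_ki1|eq_i1k] := ltngtP i.+1 k.
- by lia_ifs; apply: bal; lia.
- have [->|[eq_ik1|lt_k1i]] : i = k \/ i = k.+1 \/ (k.+1 < i)%N by lia.
  + by lia_ifs; rewrite !mul1r !PoszD.
  + subst i; lia_ifs; have /bal[e1 e2] : (k.+2 < size c)%N by lia.
    by rewrite !mulrDl !mul1r e1 e2 !PoszD; split; ring.
  + by lia_ifs; case: i lt_k1i lt_i lt_ki1 => // i *; apply: bal; lia.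
- subst k; lia_ifs; have [e1 e2] := bal i k_lt.
  by rewrite !mulrDl !mul1r e1 e2 !PoszD; split; ring.
Qed.

End Blowup.

Lemma reachable_chain_invariants c :
  reachable_chain c -> chain_unimodular c /\ chain_balanced c.
Proof.
elim=> [|d k _ [unimod bal] k_lt]; last first.
  by split; [apply: blowup_unimodular | apply: blowup_balanced].
by split=> [[|i]|i].
Qed.

Theorem lemma3p11 (c : seq vcurve) (p q : nat) :
  reachable_chain c ->
  (0 < p)%N -> (p < (size c).-1)%N ->
  (0 < q)%N -> (q < (size c).-1)%N ->
  let w := vwt (nth dummy_vc c p) in
  let w' := vwt (nth dummy_vc c q) in
  (w.2 * w'.1 < w'.2 * w.1)%N ->
  chain_det (between_marks c p q) = (w.1%:Z * w'.2%:Z - w.2%:Z * w'.1%:Z).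
Proof.
move=> /reachable_chain_invariants[unimod bal] _ lt_pc _ lt_qc w w' slope_lt.
have wdet_gt0 : 0 < wdet (weight c p) (weight c q).
  by rewrite /wdet subr_gt0 -!PoszM ltz_nat [X in (_ < X)%N]mulnC.
have lt_pq : (p < q)%N.
  case: ltngtP wdet_gt0 => // [lt_qp | ->]; last by rewrite wdetxx.
  by rewrite wdetC oppr_gt0 ltNge ltW // (wdet_weight_gt0 unimod) // lt_qp; lia.
by rewrite (chain_det_between_marks unimod bal) // lt_pq; lia.
Qed.
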